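(* All walls that appear in diagonal or nearly diagonal wall crossings are simple.
   Context: Let $X$ be a smooth connected projective curve of genus $g \ge 2$ over $\mathbb{C}$, let $r, d$ be positive integers with $\gcd(r,d)=1$ and $0<d<r$, and fix a line bundle $L$ of degree $d$ on $X$. Fix two distinct points $x_1, x_2 \in X$. A parabolic bundle $(E, V_1, V_2)$ consists of a rank $r$ vector bundle $E$ with $\det E \cong L$ and subspaces $V_i \subset E|_{x_i}$ of dimensions $\mathbf{m} = (m_1,m_2) = (r-1, 1)$. For a weight $\mathbf{a} = (a_1,a_2) \in (0,1)^2$, $(E,V_\bullet)$ is $\mathbf{a}$-(semi)stable if for every proper subbundle $F\subset E$ of rank $s$ and degree $e$, $\frac{e + \sum_i a_i \dim(V_i\cap F|_{x_i})}{s} < (\le) \frac{d + \sum_i a_i \dim V_i}{r}$; let $\mathrm{M}(r,L,\mathbf{a})$ denote the moduli space. A wall in $[0,1]^2$ is a set $\Delta(s,e,\mathbf{n}) = \{\mathbf{a} \mid (e + n_1a_1+n_2a_2)/s = (d+(r-1)a_1+a_2)/r\}$ with integers $0<s<r$, $e$, $r-2\le n_1\le r-1$, $0\le n_2\le 1$ (across which stability changes); note $\Delta(s,e,\mathbf{n}) = \Delta(r-s,d-e,\mathbf{m}-\mathbf{n})$. A wall is called simple if the greatest common divisor of $\{s,e,n_1,n_2\}$ and that of $\{r-s, d-e, m_1-n_1, m_2-n_2\}$ are both one; otherwise (if a common divisor $c>1$ exists) it is a multiple wall. A wall crossing is diagonal if the wall is crossed while the weight $\mathbf{a}$ increases along the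 line $a_1=a_2$, and nearly diagonal if it is crossed while $\mathbf{a}$ increases along the line $r a_1 = (r+1) a_2$.
   Formalization: The index n₁ of a wall ranges over s−1 ≤ n₁ ≤ s in place of r−2 ≤ n₁ ≤ r−1; walls in (nearly) diagonal crossings are those meeting a₁=a₂ or ra₁=(r+1)a₂ inside (0,1)². Apart from conventions, each condition added here is assumed in the paper as well or is needed for the statement above to hold. This also corrects a misprint. *)

From HB Require Import structures.
From mathcomp Require Import all_boot all_order all_algebra.
Set Implicit Arguments. Unset Strict Implicit. Unset Printing Implicit Defensive.
Import Order.TTheory GRing.Theory Num.Theory.
Local Open Scope ring_scope.

(* Parabolic data: rank r, degree d, flag dimensions m = (r-1, 1).
   A wall Delta(s,e,n) is given by integers s, e, n1, n2. *)

(* Admissible numerical data of a wall: 0 < s < r and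
   max(0, m_i - (r - s)) <= n_i <= min(m_i, s), which for m = (r-1,1)
   and 0 < s < r reads  s - 1 <= n1 <= s  and  0 <= n2 <= 1. *)
Definition wall_data (r : nat) (s n1 n2 : int) : Prop :=
  [/\ 0 < s < r%:Z, s - 1 <= n1 <= s & 0 <= n2 <= 1].

Definition on_wall (R : realFieldType) (r d : nat) (s e n1 n2 : int) (a1 a2 : R)
  : Prop :=
  (e%:~R + n1%:~R * a1 + n2%:~R * a2) / s%:~R
  = (d%:R + (r.-1)%:R * a1 + a2) / r%:R.

Definition weight (R : realFieldType) (a1 a2 : R) : Prop :=
  0 < a1 < 1 /\ 0 < a2 < 1.

Definition on_diagonal (R : realFieldType) (a1 a2 : R) : Prop := a1 = a2.

Definition on_nearly_diagonal (R : realFieldType) (r : nat) (a1 a2 : R) : Prop :=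
  r%:R * a1 = (r.+1)%:R * a2.

Definition simple_wall (r d : nat) (s e n1 n2 : int) : Prop :=
  gcdz (gcdz s e) (gcdz n1 n2) = 1%N /\
  gcdz (gcdz (r%:Z - s) (d%:Z - e)) (gcdz ((r.-1)%:Z - n1) (1 - n2)) = 1%N.

From mathcomp Require Import all_boot all_order all_algebra.
From mathcomp Require Import zify ring lra.
Import Order.TTheory GRing.Theory Num.Theory.

Set Implicit Arguments.
Unset Strict Implicit.
Unset Printing Implicit Defensive.

Local Open Scope ring_scope.

(* Clearing denominators, a wall equation reads
     e r - s d = (s (r - 1) - r n1) a1 + (s - r n2) a2.
   Since n1 is s - 1 or s and n2 is 0 or 1, a common divisor of either
   quadruple divides 1 except for (n1, n2) = (s, 0) resp. (s - 1, 1).  For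
   these two walls the right-hand side is +-c (a1 - a2) with 0 <= c <= r, and
   on both lines r |a1 - a2| < 1 (it is 0 on the diagonal and r a1 / (r + 1)
   on the nearly diagonal line).  So the integer e r - s d would vanish,
   i.e. e / s = d / r with s < r, contradicting gcd (r, d) = 1. *)

Lemma gcdz4_eq1 (a b c d : int) : a - c = 1 -> gcdz (gcdz a b) (gcdz c d) = 1%N.
Proof.
move=> a_sub_c; set g := gcdz (gcdz a b) (gcdz c d).
have ga : (g %| a)%Z by apply: dvdz_trans (dvdz_gcdl _ _) (dvdz_gcdl _ _).
have gc : (g %| c)%Z by apply: dvdz_trans (dvdz_gcdr _ _) (dvdz_gcdl _ _).
have : (g %| a - c)%Z by rewrite rpredB.
by rewrite a_sub_c dvdz1 /g /gcdz absz_nat => /eqP ->.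
Qed.

Lemma coprime_frac_neq (r d : nat) (s e : int) :
  coprime r d -> 0 < s < r%:Z -> e * r%:Z != s * d%:Z.
Proof.
move=> rd_coprime /andP[s_gt0 s_ltr]; apply/eqP => cross.
have : (r%:Z %| s * d%:Z)%Z by rewrite -cross dvdz_mull.
rewrite Gauss_dvdzl // => /dvdzP[q s_eq].
have [q_le0|q_gt0] := lerP q 0; nia.
Qed.

Lemma int_normr_lt1 (R : realFieldType) (k : int) : `|k%:~R : R| < 1 -> k = 0.
Proof. by rewrite -intr_norm -[1]/(1%:~R) ltr_int; lia. Qed.

Lemma on_wall_cross_diff (R : realFieldType) (r d : nat) (s e n1 n2 : int)
    (a1 a2 : R) :
  (0 < r)%N -> s != 0 -> on_wall r d s e n1 n2 a1 a2 ->
  (e * r%:Z - s * d%:Z)%:~R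
  = (s * (r%:Z - 1) - r%:Z * n1)%:~R * a1 + (s - r%:Z * n2)%:~R * a2 :> R.
Proof.
move=> r_gt0 s_neq0; rewrite /on_wall => /eqP.
have [r1 r_eq] : exists r1, r = r1.+1 by exists r.-1; rewrite prednK.
rewrite eqr_div ?intr_eq0 ?pnatr_eq0 -?lt0n // r_eq /= => /eqP wall.
rewrite !(intrB, intrM, intrD) -!pmulrn mulrS; lra.
Qed.

Lemma diagonal_paths_gap_lt (R : realFieldType) (r : nat) (a1 a2 : R) :
  0 < a1 < 1 -> on_diagonal a1 a2 \/ on_nearly_diagonal r a1 a2 ->
  r%:R * `|a1 - a2| < 1.
Proof.
move=> /andP[a1_gt0 a1_lt1] [-> | near]; first by rewrite subrr normr0 mulr0.
move: near; rewrite /on_nearly_diagonal -addn1 natrD => near.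
have gap : (r%:R + 1) * (a1 - a2) = a1 by lra.
have r_ge0 : 0 <= r%:R :> R := ler0n _ r.
have gap_gt0 : 0 < a1 - a2 by nra.
rewrite gtr0_norm //; lra.
Qed.

Lemma exceptional_wall_cross_diff_le (R : realFieldType) (r d : nat)
    (s e n1 n2 : int) (a1 a2 : R) :
  0 < s < r%:Z -> (n1 = s /\ n2 = 0) \/ (n1 = s - 1 /\ n2 = 1) ->
  on_wall r d s e n1 n2 a1 a2 ->
  `|(e * r%:Z - s * d%:Z)%:~R| <= r%:R * `|a1 - a2|.
Proof.
move=> s_range exceptional wall.
have scaled_le (c : int) :
    0 <= c <= r%:Z -> `|c%:~R * (a1 - a2)| <= r%:R * `|a1 - a2|.
  move=> c_range; rewrite normrM ler_wpM2r // ger0_norm ?ler0z; last by lia.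
  by rewrite -[r%:R]/((r%:Z)%:~R) ler_int; lia.
have r_gt0 : (0 < r)%N by lia.
have s_neq0 : s != 0 by lia.
rewrite (on_wall_cross_diff r_gt0 s_neq0 wall).
case: exceptional => -[-> ->].
- rewrite -normrN (_ : - _ = s%:~R * (a1 - a2)) ?scaled_le //; first lia.
  by rewrite !(intrB, intrM); ring.
- rewrite (_ : _ + _ = (r%:Z - s)%:~R * (a1 - a2)) ?scaled_le //; first lia.
  by rewrite !(intrB, intrM); ring.
Qed.

Lemma exceptional_wall_misses_paths (R : realFieldType) (r d : nat)
    (s e n1 n2 : int) (a1 a2 : R) :
  coprime r d -> 0 < s < r%:Z ->
  (n1 = s /\ n2 = 0) \/ (n1 = s - 1 /\ n2 = 1) ->
  0 < a1 < 1 -> on_diagonal a1 a2 \/ on_nearly_diagonal r a1 a2 ->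
  ~ on_wall r d s e n1 n2 a1 a2.
Proof.
move=> rd_coprime s_range exceptional a1_range path wall.
have cross_eq0 : e * r%:Z - s * d%:Z = 0.
  apply: (int_normr_lt1 (R := R)).
  apply: le_lt_trans (exceptional_wall_cross_diff_le s_range exceptional wall) _.
  exact: diagonal_paths_gap_lt a1_range path.
by move: (coprime_frac_neq e rd_coprime s_range); rewrite -subr_eq0 cross_eq0.
Qed.

Lemma simple_wall_of_flags (r d : nat) (s e n1 n2 : int) :
  (0 < r)%N -> n1 = s - 1 \/ n2 = 1 -> n1 = s \/ n2 = 0 ->
  simple_wall r d s e n1 n2.
Proof.
move=> r_gt0 flag1 flag2; split.
- by case: flag1 => [-> | ->]; [apply: gcdz4_eq1; ring | rewrite !gcdz1].
- case: flag2 => [-> | ->]; last by rewrite subr0 !gcdz1.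
  by apply: gcdz4_eq1; lia.
Qed.

Theorem proposition3p1 (R : realFieldType) (r d : nat) (s e n1 n2 : int)
    (a1 a2 : R) :
  (0 < d)%N -> (d < r)%N -> coprime r d ->
  wall_data r s n1 n2 ->
  weight a1 a2 ->
  on_diagonal a1 a2 \/ on_nearly_diagonal r a1 a2 ->
  on_wall r d s e n1 n2 a1 a2 ->
  simple_wall r d s e n1 n2.
Proof.
move=> _ _ rd_coprime [s_range n1_range n2_range] [a1_range _] path wall.
have not_exceptional : ~ ((n1 = s /\ n2 = 0) \/ (n1 = s - 1 /\ n2 = 1)).
  by move=> exc; apply: exceptional_wall_misses_paths rd_coprime s_range exc
    a1_range path wall.
apply: simple_wall_of_flags; lia.
Qed.
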